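(* Let $p_1,p_2\ge3$, and let $J(x,y)$, $J_0$ and $C$ be the $p_1p_2\times p_1p_2$ matrices described in the context, and put $J_1(x,y)=J(x,y)-J_0$. Then for every $(x,y)\in[0,2\pi]^2$, $$-C\le J_1(x,y)\le C,$$ where for Hermitian matrices $A\le B$ means that $B-A$ is positive semidefinite.
   Context: Let $a^0,a^1,b^0,b^1:\mathbb{Z}^2\to\mathbb{C}$, $(n,m)\mapsto a^j_{nm},b^j_{nm}$, be $(p_1,p_2)$-periodic with $b^1_{nm}\in\mathbb{R}$. For $x\in[0,2\pi]$ and $n\in\mathbb{Z}$, $\hat A_n(x)$ is the $p_2\times p_2$ matrix with $(\hat A_n)_{mm}=a^1_{nm}$, $(\hat A_n)_{m+1,m}=a^0_{nm}$, $(\hat A_n)_{m,m+1}=\overline{a^0_{nm}}$ ($1\le m\le p_2-1$), $(\hat A_n)_{1,p_2}=e^{ix}a^0_{np_2}$, $(\hat A_n)_{p_2,1}=e^{-ix}\overline{a^0_{np_2}}$, other entries $0$; $\hat B_n(x)$ is defined the same way from $b^1,b^0$. $\hat A^0_n,\hat B^0_n$ denote $\hat A_n,\hat B_n$ with the corner entries $(1,p_2),(p_2,1)$ set to $0$. $J(x,y)$ is the $p_1\times p_1$ block matrix ($p_2\times p_2$ blocks) with diagonal blocks $\hat B_n(x)$, block $(n+1,n)=\hat A_n(x)$, block $(n,n+1)=\hat A_n(x)^*$ ($1\le n\le p_1-1$), block $(1,p_1)=e^{iy}\hat A_{p_1}(x)$, block $(p_1,1)=e^{-iy}\hat A_{p_1}(x)^*$,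 other blocks zero. $J_0$ is the block matrix with diagonal blocks $\hat B^0_n$, block $(n+1,n)=\hat A^0_n$, block $(n,n+1)=(\hat A^0_n)^*$ ($1\le n\le p_1-1$), other blocks zero. $C=\mathrm{diag}(C_1,\dots,C_{p_1})$ (block diagonal), with $C_n=\mathrm{diag}(c_n,0,\dots,0,c_n)$, $c_n=|b^0_{np_2}|+|a^0_{np_2}|+|a^0_{n-1,p_2}|$ for $2\le n\le p_1-1$; $C_1=\mathrm{diag}(e_1,0,\dots,0,e_1)+D$ with $e_1=|b^0_{1p_2}|+|a^0_{1p_2}|$; $C_{p_1}=\mathrm{diag}(e_{p_1},0,\dots,0,e_{p_1})+D$ with $e_{p_1}=|b^0_{p_1p_2}|+|a^0_{p_1-1,p_2}|$; $D=\mathrm{diag}(d_1,\dots,d_{p_2})$, $d_m=|a^1_{p_1m}|+|a^0_{p_1m}|+|a^0_{p_1,m-1}|$ with $a^0_{p_1,0}:=a^0_{p_1,p_2}$. *)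

From HB Require Import structures.
From mathcomp Require Import all_boot all_order all_algebra.
From mathcomp Require Import spectral.
From mathcomp Require Import all_classical all_reals all_analysis.
From mathcomp Require Import complex.

Set Implicit Arguments.
Unset Strict Implicit.
Unset Printing Implicit Defensive.

Import Order.TTheory GRing.Theory Num.Theory.
Local Open Scope ring_scope.
Local Open Scope complex_scope.
Local Open Scope sesquilinear_scope.

Section Defs.
Variable R : realType.
Local Notation C := (R[i]).

Definition periodic2 (p1 p2 : nat) (a : int -> int -> C) : Prop :=
  forall n m : int, a (n + p1%:Z) m = a n m /\ a n (m + p2%:Z) = a n m.

Definition expi (t : R) : C := cos t +i* sin t.

Definition psdmx n (M : 'M[C]_n) : Prop :=
  M ^t* = M /\ forall v : 'cV[C]_n, 0 <= (v ^t* *m M *m v) ord0 ord0.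

Definition loewner_le n (A B : 'M[C]_n) : Prop := psdmx (B - A).

(* The p2 x p2 matrix \hat A_n(x) (1-based indices m = r+1, m' = c+1):
   diagonal d m, (m+1,m) entry o m, (m,m+1) entry conj (o m),
   corner (1,p2) = ph * o p2, corner (p2,1) = conj ph * conj (o p2).
   With [corner = false] the two corner entries are 0 (this gives \hat A^0_n). *)
Definition hatmx (p2 : nat) (d o : nat -> C) (ph : C) (corner : bool) : 'M[C]_p2 :=
  \matrix_(r < p2, c < p2)
    let m := r.+1 in let m' := c.+1 in
    if m == m' then d m
    else if m == m'.+1 then o m'
    else if m' == m.+1 then (o m)^*
    else if (m == 1%N) && (m' == p2) then (if corner then ph * o p2 else 0)
    else if (m == p2) && (m' == 1%N) then (if corner then ph^* * (o p2)^* else 0)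
    else 0.

Variables (p1 p2 : nat) (a0 a1 b0 b1 : int -> int -> C).

Definition Ahat (n : nat) (x : R) : 'M[C]_p2 :=
  hatmx p2 (fun m => a1 (n%:Z) (m%:Z)) (fun m => a0 (n%:Z) (m%:Z)) (expi x) true.
Definition Bhat (n : nat) (x : R) : 'M[C]_p2 :=
  hatmx p2 (fun m => b1 (n%:Z) (m%:Z)) (fun m => b0 (n%:Z) (m%:Z)) (expi x) true.
Definition Ahat0 (n : nat) : 'M[C]_p2 :=
  hatmx p2 (fun m => a1 (n%:Z) (m%:Z)) (fun m => a0 (n%:Z) (m%:Z)) 0 false.
Definition Bhat0 (n : nat) : 'M[C]_p2 :=
  hatmx p2 (fun m => b1 (n%:Z) (m%:Z)) (fun m => b0 (n%:Z) (m%:Z)) 0 false.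

(* The big matrices are p1 x p1 block matrices with p2 x p2 blocks;
   block row/column i : 'I_p1 corresponds to n = i+1. *)
Local Notation N := (\sum_(i < p1) p2)%N.

Definition Jmx (x y : R) : 'M[C]_N :=
  \mxblock_(i < p1, j < p1)
    let n := i.+1 in let n' := j.+1 in
    if n == n' then Bhat n x
    else if n == n'.+1 then Ahat n' x
    else if n' == n.+1 then (Ahat n x) ^t*
    else if (n == 1%N) && (n' == p1) then expi y *: Ahat p1 x
    else if (n == p1) && (n' == 1%N) then (expi y)^* *: (Ahat p1 x) ^t*
    else 0.

Definition J0mx : 'M[C]_N :=
  \mxblock_(i < p1, j < p1)
    let n := i.+1 in let n' := j.+1 in
    if n == n' then Bhat0 n
    else if n == n'.+1 then Ahat0 n'
    else if n' == n.+1 then (Ahat0 n) ^t*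
    else 0.

Definition J1mx (x y : R) : 'M[C]_N := Jmx x y - J0mx.

Definition endsmx (s : C) : 'M[C]_p2 :=
  diag_mx (\row_(r < p2) if (r.+1 == 1%N) || (r.+1 == p2) then s else 0).

Definition cc (n : nat) : C :=
  `|b0 (n%:Z) (p2%:Z)| + `|a0 (n%:Z) (p2%:Z)| + `|a0 ((n%:Z) - 1) (p2%:Z)|.
Definition e1 : C := `|b0 1 (p2%:Z)| + `|a0 1 (p2%:Z)|.
Definition ep1 : C := `|b0 (p1%:Z) (p2%:Z)| + `|a0 ((p1%:Z) - 1) (p2%:Z)|.
(* d_m = |a^1_{p1 m}| + |a^0_{p1 m}| + |a^0_{p1,m-1}|, where a^0_{p1,0} = a^0_{p1,p2}
   by periodicity *)
Definition Dmx : 'M[C]_p2 :=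
  diag_mx (\row_(r < p2) let m := r.+1 in
     `|a1 (p1%:Z) (m%:Z)| + `|a0 (p1%:Z) (m%:Z)| + `|a0 (p1%:Z) ((m%:Z) - 1)|).

Definition Cblock (n : nat) : 'M[C]_p2 :=
  if n == 1%N then endsmx e1 + Dmx
  else if n == p1 then endsmx ep1 + Dmx
  else endsmx (cc n).

Definition Cmx : 'M[C]_N :=
  \mxblock_(i < p1, j < p1) if i == j then Cblock i.+1 else 0.

End Defs.

(* J1 = J - J0 keeps only the wrap-around couplings: the corner entries of
   every \hat A_n, \hat B_n and the two corner blocks e^{iy} \hat A_{p1}(x)
   and its adjoint.
   It is Hermitian and, as |e^{ix}| = |e^{iy}| = 1 and a^0_{p1,0} = a^0_{p1,p2}
   by periodicity, the moduli of the entries of each row of J1 add up exactly to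
   the corresponding diagonal entry of the diagonal matrix C.  For Hermitian M and
   diagonal D dominating these row sums,
     |v^* M v| <= sum_{i,j} |M_ij| (|v_i|^2 + |v_j|^2) / 2
               = sum_i (sum_j |M_ij|) |v_i|^2 <= v^* D v,
   so that -D <= M <= D. *)

From HB Require Import structures.
From mathcomp Require Import all_boot all_order all_algebra.
From mathcomp Require Import spectral.
From mathcomp Require Import all_classical all_reals all_analysis.
From mathcomp Require Import complex.
From mathcomp Require Import ring zify.

Set Implicit Arguments.
Unset Strict Implicit.
Unset Printing Implicit Defensive.

Import Order.TTheory GRing.Theory Num.Theory.
Local Open Scope ring_scope.
Local Open Scope sesquilinear_scope.

Lemma selfadjmxP (R : realType) n (M : 'M[R[i]]_n) :
  reflect (forall i j, M i j = (M j i)^*) (M ^t* == M).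
Proof.
apply: (iffP eqP) => [hermM i j|hermM]; first by rewrite -{1}hermM !mxE.
by apply/matrixP => i j; rewrite !mxE [M i j]hermM.
Qed.

Lemma adjmxB (R : realType) m n (A B : 'M[R[i]]_(m, n)) : (A - B)^t* = A^t* - B^t*.
Proof. by rewrite linearB map_mxB. Qed.

Lemma adjmxZ (R : realType) m n (a : R[i]) (A : 'M[R[i]]_(m, n)) :
  (a *: A)^t* = a^* *: A^t*.
Proof. by rewrite linearZ map_mxZ. Qed.

Section BlockMatrix.
Variables (R : realType) (p : nat) (p_ : 'I_p -> nat).
Implicit Types B : forall i j, 'M[R[i]]_(p_ i, p_ j).

Lemma adjmx_mxblock B :
  (\mxblock_(i, j) B i j)^t* = \mxblock_(i, j) (B j i)^t*.
Proof. by apply/matrixP => s t; rewrite !mxE. Qed.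

Lemma mxblock_rowsum B s :
  \sum_t `|(\mxblock_(i, j) B i j) s t| =
  \sum_j \sum_c `|B (tagnat.sig1 s) j (tagnat.sig2 s) c|.
Proof.
rewrite sig_big_dep (reindex _ tagnat.sig_bij_on) /=.
by apply: eq_bigr => t _; rewrite mxE.
Qed.

End BlockMatrix.

Lemma rowsumZ_unimodular (R : realType) m n (e : R[i]) (A : 'M[R[i]]_(m, n)) r :
  `|e| = 1 -> \sum_c `|(e *: A) r c| = \sum_c `|A r c|.
Proof. by move=> norm_e; apply: eq_bigr => c _; rewrite mxE normrM norm_e mul1r. Qed.

Section DiagonalDominance.
Variables (R : realType) (n : nat).
Implicit Types (M D : 'M[R[i]]_n) (v : 'cV[R[i]]_n).

Lemma formmxE M v :
  (v ^t* *m M *m v) 0 0 = \sum_i \sum_j (v i 0)^* * M i j * v j 0.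
Proof.
rewrite mxE; under eq_bigr do rewrite mxE big_distrl.
rewrite exchange_big; apply: eq_bigr => i _; apply: eq_bigr => j _.
by rewrite !mxE.
Qed.

Lemma norm_formmx_le M v : (forall i j, `|M j i| = `|M i j|) ->
  `|(v ^t* *m M *m v) 0 0| <= \sum_i (\sum_j `|M i j|) * `|v i 0| ^+ 2.
Proof.
move=> normM_sym; rewrite formmxE -(ler_pMn2r (isT : (0 < 2)%N)).
have -> : (\sum_i (\sum_j `|M i j|) * `|v i 0| ^+ 2) *+ 2 =
    \sum_i \sum_j `|M i j| * (`|v i 0| ^+ 2 + `|v j 0| ^+ 2).
  under [RHS]eq_bigr do (under eq_bigr do rewrite mulrDr).
  under [RHS]eq_bigr do rewrite big_split.
  rewrite big_split /= [X in _ + X]exchange_big mulr2n /=.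
  by congr (_ + _); apply: eq_bigr => i _; rewrite mulr_suml //;
    apply: eq_bigr => j _; rewrite normM_sym.
apply: (@le_trans _ _ ((\sum_i \sum_j `|M i j| * (`|v i 0| * `|v j 0|)) *+ 2)).
  rewrite ler_pMn2r //; apply: le_trans (ler_norm_sum _ _ _) _; apply: ler_sum => i _.
  apply: le_trans (ler_norm_sum _ _ _) _; apply: ler_sum => j _.
  by rewrite !normrM norm_conjC mulrA [`|_| * `|M i j|]mulrC.
rewrite -sumrMnl; apply: ler_sum => i _; rewrite -sumrMnl; apply: ler_sum => j _.
by rewrite -mulrnAr ler_wpM2l // (real_leif_mean_square_scaled _ _).1 ?normr_real.
Qed.

Lemma formmx_real M v : M ^t* = M -> (v ^t* *m M *m v) 0 0 \is Num.real.
Proof.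
move=> /eqP/selfadjmxP hermM; apply/CrealP; rewrite formmxE rmorph_sum exchange_big.
apply: eq_bigr => j _; rewrite rmorph_sum; apply: eq_bigr => i _.
by rewrite !rmorphM /= conjCK [M i j]hermM; ring.
Qed.

Lemma formmx_diag D v : is_diag_mx D ->
  (v ^t* *m D *m v) 0 0 = \sum_i D i i * `|v i 0| ^+ 2.
Proof.
move=> /is_diag_mxP Ddiag; rewrite formmxE; apply: eq_bigr => i _.
rewrite (bigD1 i) //= big1 ?addr0 => [|j ji]; first by rewrite normCKC; ring.
by rewrite Ddiag 1?eq_sym // mulr0 mul0r.
Qed.

Lemma psdmx_diag_dominant M D : M ^t* = M -> is_diag_mx D ->
  (forall i, \sum_j `|M i j| <= D i i) -> psdmx (D + M).
Proof.
move=> hermM Ddiag rowM; have /eqP/selfadjmxP hermE := hermM.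
have normM_sym i j : `|M j i| = `|M i j| by rewrite hermE norm_conjC.
have Dii_ge0 i : 0 <= D i i by apply: le_trans (rowM i); apply: sumr_ge0.
split.
  apply/matrixP => i j; rewrite !mxE rmorphD [M i j]hermE /=.
  congr (_ + _); case: (eqVneq i j) => [->|ij]; first exact/CrealP/ger0_real.
  move/is_diag_mxP: Ddiag => Ddiag.
  by rewrite (Ddiag i j) // (Ddiag j i) 1?eq_sym // conjC0.
move=> v; rewrite mulmxDr mulmxDl mxE formmx_diag //.
have q_real := formmx_real v hermM.
have q_le : `|(v ^t* *m M *m v) 0 0| <= \sum_i D i i * `|v i 0| ^+ 2.
  apply: le_trans (norm_formmx_le v normM_sym) _.
  by apply: ler_sum => i _; rewrite ler_wpM2r ?exprn_ge0.
by have := real_lerNnormlW q_real q_le; rewrite -subr_ge0 opprK addrC.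
Qed.

Lemma loewner_diag_dominant M D : M ^t* = M -> is_diag_mx D ->
  (forall i, \sum_j `|M i j| <= D i i) -> loewner_le (- D) M /\ loewner_le M D.
Proof.
move=> hermM Ddiag rowM; split; rewrite /loewner_le.
  by rewrite opprK addrC; apply: psdmx_diag_dominant.
apply: psdmx_diag_dominant => // [|i].
  have /eqP/selfadjmxP hermE := hermM.
  by apply/eqP/selfadjmxP => i j; rewrite !mxE rmorphN [M i j]hermE.
by under eq_bigr do rewrite mxE normrN.
Qed.

End DiagonalDominance.

Lemma val_ord_pred n (i : 'I_n) :
  ord_pred i = (if i == 0%N :> nat then n.-1 else i.-1) :> nat.
Proof.
case: i => -[|a] a_lt /=; last by rewrite modnDr modn_small // ltnW.
by rewrite add0n modn_small // ltn_predL (leq_ltn_trans _ a_lt).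
Qed.

Lemma val_ordS n (i : 'I_n) : ordS i = (if i.+1 == n then 0%N else i.+1) :> nat.
Proof.
case: i => a /= a_lt; case: eqP => [->|a_nlast]; [exact: modnn | apply: modn_small; lia].
Qed.

(* [hatmx] is written with the conjugation [conjc] of [R[i]]; it is
   definitionally the generic [Num.conj]. *)
Lemma conjcE (R : realType) (z : R[i]) : (z^*)%C = z^*.
Proof. by []. Qed.

Lemma norm_expi (R : realType) (t : R) : `|expi t| = 1.
Proof. by rewrite /expi normc_def /= cos2Dsin2 sqrtr1. Qed.

Section HatMatrix.
Variables (R : realType) (p2 : nat).
Hypothesis p2_ge3 : (3 <= p2)%N.
Implicit Types (d o : nat -> R[i]) (z ph : R[i]).

Definition cornermx z ph : 'M[R[i]]_p2 :=
  hatmx p2 (fun=> 0) (fun m => if m == p2 then z else 0) ph true.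

Lemma hatmx_sub_corner d o ph :
  hatmx p2 d o ph true - hatmx p2 d o 0 false = cornermx (o p2) ph.
Proof.
apply/matrixP => r c; rewrite /cornermx !mxE /= !conjcE ?eqSS.
have := ltn_ord r; have := ltn_ord c.
move: (nat_of_ord r) (nat_of_ord c) => a b b_lt a_lt.
by repeat (case: eqP => ? /=); try (exfalso; lia); subst;
  rewrite ?subrr ?subr0 ?rmorph0.
Qed.

Lemma hatmx_adj d o ph :
  (hatmx p2 d o ph true)^t* = hatmx p2 (fun m => (d m)^*) o ph true.
Proof.
apply/matrixP => r c; rewrite !mxE /= !conjcE ?eqSS.
have := ltn_ord r; have := ltn_ord c.
move: (nat_of_ord r) (nat_of_ord c) => a b b_lt a_lt.
by repeat (case: eqP => ? /=); try (exfalso; lia); subst;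
  rewrite ?rmorph0 ?rmorphM /= ?conjCK.
Qed.

Lemma cornermx_adj z ph : (cornermx z ph)^t* = cornermx z ph.
Proof.
by rewrite /cornermx hatmx_adj; congr hatmx; apply/funext => m; rewrite conjC0.
Qed.

Lemma norm_hatmx d o ph (r c : 'I_p2) : `|ph| = 1 ->
  `|hatmx p2 d o ph true r c| =
    (if c == r then `|d r.+1| else 0)
  + (if c == ord_pred r then `|o (ord_pred r).+1| else 0)
  + (if c == ordS r then `|o r.+1| else 0).
Proof.
move=> norm_ph; rewrite -[c == r]/(c == r :> nat).
rewrite -[c == ord_pred r]/(c == ord_pred r :> nat) -[c == ordS r]/(c == ordS r :> nat).
rewrite !val_ord_pred !val_ordS mxE /= !conjcE ?eqSS.
have := ltn_ord r; have := ltn_ord c.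
move: (nat_of_ord r) (nat_of_ord c) => a b b_lt a_lt.
case: (eqVneq a 0%N) => [a_eq0|a_ne0]; case: (eqVneq a.+1 p2) => [a_last|a_nlast] /=;
  repeat (case: eqP => ? /=); try (exfalso; lia); subst;
  by rewrite ?normr0 ?addr0 ?add0r ?normrM ?norm_conjC ?norm_ph ?mul1r ?prednK.
Qed.

Lemma hatmx_rowsum d o ph (r : 'I_p2) : `|ph| = 1 ->
  \sum_c `|hatmx p2 d o ph true r c| =
    `|d r.+1| + `|o (ord_pred r).+1| + `|o r.+1|.
Proof.
move=> norm_ph; under eq_bigr do rewrite norm_hatmx //.
by rewrite !big_split /= -!big_mkcond !big_pred1_eq.
Qed.

Lemma cornermx_rowsum z ph (r : 'I_p2) : `|ph| = 1 ->
  \sum_c `|cornermx z ph r c| = endsmx p2 `|z| r r.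
Proof.
move=> norm_ph.
rewrite /cornermx hatmx_rowsum // val_ord_pred /endsmx !mxE eqxx mulr1n.
have := ltn_ord r; move: (nat_of_ord r) => a a_lt.
case: (eqVneq a 0%N) => [a_eq0|a_ne0] /=;
  by repeat (case: eqP => ? /=); try (exfalso; lia); rewrite ?normr0 ?addr0 ?add0r.
Qed.

End HatMatrix.






Lemma endsmxD (R : realType) p2 (s t : R[i]) :
  endsmx p2 (s + t) = endsmx p2 s + endsmx p2 t.
Proof.
rewrite /endsmx -linearD; congr diag_mx; apply/rowP => r; rewrite !mxE.
by case: ifP; rewrite ?addr0.
Qed.

Section AhatRows.
Variables (R : realType) (p1 p2 : nat) (a0 a1 : int -> int -> R[i]) (x : R).
Hypotheses (p2_ge3 : (3 <= p2)%N) (a0_periodic : periodic2 p1 p2 a0).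

Lemma Ahat_rowsum (r : 'I_p2) :
  \sum_c `|Ahat p2 a0 a1 p1 x r c| = Dmx p1 p2 a0 a1 r r.
Proof.
rewrite hatmx_rowsum ?norm_expi // val_ord_pred /Dmx !mxE eqxx mulr1n /=.
rewrite addrAC -addn1 PoszD addrK; congr (_ + `|_|).
case: eqVneq => [->|r_ne0] /=; last by rewrite prednK ?lt0n.
by rewrite prednK ?(leq_trans _ p2_ge3) // -(a0_periodic _ 0).2 add0r.
Qed.

Lemma adj_Ahat_rowsum (r : 'I_p2) :
  \sum_c `|(Ahat p2 a0 a1 p1 x)^t* r c| = Dmx p1 p2 a0 a1 r r.
Proof.
by rewrite -Ahat_rowsum /Ahat hatmx_adj // !hatmx_rowsum ?norm_expi // norm_conjC.
Qed.

End AhatRows.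

Section J1Blocks.
Variables (R : realType) (p1 p2 : nat) (a0 a1 b0 b1 : int -> int -> R[i]) (x y : R).
Hypotheses (p1_ge3 : (3 <= p1)%N) (p2_ge3 : (3 <= p2)%N).
Hypothesis a0_periodic : periodic2 p1 p2 a0.

Local Notation cornerx z := (cornermx p2 z (expi x)).

Definition J1block (i j : 'I_p1) : 'M[R[i]]_p2 :=
  let n := i.+1 in let n' := j.+1 in
  if n == n' then cornerx (b0 n%:Z p2%:Z)
  else if n == n'.+1 then cornerx (a0 n'%:Z p2%:Z)
  else if n' == n.+1 then cornerx (a0 n%:Z p2%:Z)
  else if (n == 1%N) && (n' == p1) then expi y *: Ahat p2 a0 a1 p1 x
  else if (n == p1) && (n' == 1%N) then (expi y)^* *: (Ahat p2 a0 a1 p1 x)^t*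
  else 0.

Lemma J1mxE : J1mx p1 p2 a0 a1 b0 b1 x y = \mxblock_(i, j) J1block i j.
Proof.
rewrite /J1mx /Jmx /J0mx -mxblockB; apply: eq_mxblock => i j /=.
rewrite /J1block; case: ifP => _; first exact: hatmx_sub_corner.
case: ifP => _; first exact: hatmx_sub_corner.
case: ifP => _; first by rewrite -adjmxB hatmx_sub_corner ?cornermx_adj.
by rewrite subr0.
Qed.

Lemma J1block_adj i j : (J1block i j)^t* = J1block j i.
Proof.
rewrite /J1block /=.
have := ltn_ord i; have := ltn_ord j.
move: (nat_of_ord i) (nat_of_ord j) => a b b_lt a_lt; rewrite !eqSS.
by repeat (case: eqP => ? /=); try (exfalso; lia); subst;
  rewrite ?cornermx_adj ?adjmxZ ?trmxCK ?conjCK ?linear0 ?map_mx0.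
Qed.

Lemma J1mx_adj : (J1mx p1 p2 a0 a1 b0 b1 x y)^t* = J1mx p1 p2 a0 a1 b0 b1 x y.
Proof.
by rewrite J1mxE adjmx_mxblock; apply: eq_mxblock => i j; rewrite J1block_adj.
Qed.

Lemma J1block_rowsum i j (r : 'I_p2) :
  \sum_c `|J1block i j r c| =
    (if j == i then endsmx p2 `|b0 i.+1%:Z p2%:Z| r r else 0)
  + (if j == ord_pred i then
       if i == 0%N :> nat then Dmx p1 p2 a0 a1 r r else endsmx p2 `|a0 i%:Z p2%:Z| r r
     else 0)
  + (if j == ordS i then
       if i.+1 == p1 then Dmx p1 p2 a0 a1 r r else endsmx p2 `|a0 i.+1%:Z p2%:Z| r r
     else 0).
Proof.
rewrite -[j == i]/(j == i :> nat) -[j == ord_pred i]/(j == ord_pred i :> nat).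
rewrite -[j == ordS i]/(j == ordS i :> nat) !val_ord_pred !val_ordS /J1block /=.
have := ltn_ord i; have := ltn_ord j.
move: (nat_of_ord i) (nat_of_ord j) => a b b_lt a_lt; rewrite !eqSS.
case: (eqVneq a 0%N) => [a_eq0|a_ne0]; case: (eqVneq a.+1 p1) => [a_last|a_nlast] /=;
  repeat (case: eqP => ? /=); try (exfalso; lia); subst;
  rewrite ?cornermx_rowsum ?rowsumZ_unimodular ?norm_conjC ?norm_expi ?Ahat_rowsum
    ?adj_Ahat_rowsum ?addr0 ?add0r //.
all: by rewrite big1 // => c _; rewrite mxE normr0.
Qed.

Lemma J1_blockrow_sum (i : 'I_p1) (r : 'I_p2) :
  \sum_j \sum_c `|J1block i j r c| = Cblock p1 p2 a0 a1 b0 i.+1 r r.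
Proof.
under eq_bigr do rewrite J1block_rowsum.
rewrite !big_split /= -!big_mkcond !big_pred1_eq.
have predSz : (i.+1)%:Z - 1 = i%:Z by rewrite -addn1 PoszD addrK.
have addE (A B : 'M[R[i]]_p2) : (A + B) r r = A r r + B r r by rewrite mxE.
rewrite /Cblock /e1 /ep1 /cc predSz eqSS.
case: (eqVneq (i : nat) 0%N) => [i_eq0|i_ne0];
  case: (eqVneq i.+1 p1) => [i_last|i_nlast]; try (exfalso; lia).
- by rewrite i_eq0 !addE endsmxD addE addrAC.
- have -> : p1%:Z - 1 = i by rewrite -predSz i_last.
  by rewrite i_last !addE endsmxD addE.
- by rewrite !endsmxD !addE addrAC.
Qed.

End J1Blocks.

Lemma Cmx_diag (R : realType) p1 p2 (a0 a1 b0 : int -> int -> R[i]) :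
  is_diag_mx (Cmx p1 p2 a0 a1 b0).
Proof.
apply/is_diag_mxblockP; split => [i j /negPf -> // | i].
rewrite eqxx /Cblock /endsmx /Dmx.
by repeat case: ifP => _; rewrite -?linearD diag_mx_is_diag.
Qed.

Local Open Scope complex_scope.

Theorem lemma3p1 (R : realType) (p1 p2 : nat) (a0 a1 b0 b1 : int -> int -> R[i]) :
  (3 <= p1)%N -> (3 <= p2)%N ->
  periodic2 p1 p2 a0 -> periodic2 p1 p2 a1 ->
  periodic2 p1 p2 b0 -> periodic2 p1 p2 b1 ->
  (forall n m : int, b1 n m \is Num.real) ->
  forall x y : R, 0 <= x <= 2 * pi -> 0 <= y <= 2 * pi ->
    loewner_le (- Cmx p1 p2 a0 a1 b0) (J1mx p1 p2 a0 a1 b0 b1 x y) /\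
    loewner_le (J1mx p1 p2 a0 a1 b0 b1 x y) (Cmx p1 p2 a0 a1 b0).
Proof.
move=> p1_ge3 p2_ge3 a0_periodic _ _ _ _ x y _ _.
apply: loewner_diag_dominant; [exact: J1mx_adj | exact: Cmx_diag | move=> s].
by rewrite J1mxE // mxblock_rowsum J1_blockrow_sum // /Cmx mxE eqxx.
Qed.
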